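(* Let $\mathrm{Bu}=\beta(B_3)$ and $\Delta=(\sigma_1\sigma_2\sigma_1)^2\in B_3$. The restriction $\overline{\rho}|_{\mathrm{Bu}}:\mathrm{Bu}\to\mathrm{PSL}(2,\mathbb{Z})$ is surjective and its kernel is the center $Z(\mathrm{Bu})$, which is infinite cyclic generated by $\beta(\Delta)$. In other words, $\overline{\rho}$ induces a short exact sequence $1\to\mathbb{Z}\to\mathrm{Bu}\to\mathrm{PSL}(2,\mathbb{Z})\to1$.
   Context: Let $B_3$ be the braid group on three strands with standard generators $\sigma_1,\sigma_2$, and $\beta:B_3\to\mathrm{GL}(3,\mathbb{Z}[t,t^{-1}])$ the Burau representation $\beta(\sigma_1)=\begin{pmatrix}1-t&t&0\\1&0&0\\0&0&1\end{pmatrix}$, $\beta(\sigma_2)=\begin{pmatrix}1&0&0\\0&1-t&t\\0&1&0\end{pmatrix}$. For $A\in\mathrm{Bu}$, let $B=A|_{t=-1}\in\mathrm{GL}(3,\mathbb{Z})$ and $\rho(B)=\begin{pmatrix}1-B_{13}&1-B_{11}\\1-B_{33}&1-B_{31}\end{pmatrix}\in\mathrm{GL}(2,\mathbb{Z})$; $\overline{\rho}(A)$ is the image of $\rho(B)$ in the projective linear group $\mathrm{PGL}(2,\mathbb{Q}(t))$ (quotient by nonzero scalars). $\mathrm{PSL}(2,\mathbb{Z})$ is identified with the image of $\mathrm{SL}(2,\mathbb{Z})$ there. *)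

From HB Require Import structures.
From mathcomp Require Import all_boot all_order all_algebra fraction.
From Stdlib Require Import ClassicalEpsilon.
Set Implicit Arguments. Unset Strict Implicit. Unset Printing Implicit Defensive.
Import Order.TTheory GRing.Theory Num.Theory.
Local Open Scope ring_scope.

(* K = Q(t), realised as the fraction field of Z[t]; Z[t,t^-1] sits inside it. *)
Definition K : Type := {fraction {poly int}}.
Definition tK : K := tofrac ('X : {poly int}).

Definition mx3 (a b c d e f g h k : K) : 'M[K]_3 :=
  \matrix_(i < 3, j < 3) nth 0 (nth [::] [:: [:: a; b; c]; [:: d; e; f]; [:: g; h; k]] i) j.

Definition beta_s1 : 'M[K]_3 := mx3 (1 - tK) tK 0  1 0 0  0 0 1.
Definition beta_s2 : 'M[K]_3 := mx3 1 0 0  0 (1 - tK) tK  0 1 0.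

(* braid words: (true, _) = sigma_1, (false, _) = sigma_2; (_, true) = inverse *)
Definition beta_gen (x : bool * bool) : 'M[K]_3 :=
  let g := if x.1 then beta_s1 else beta_s2 in if x.2 then invmx g else g.
Definition beta_word (w : seq (bool * bool)) : 'M[K]_3 :=
  foldr (fun x acc => beta_gen x *m acc) 1%:M w.

Definition inBu (A : 'M[K]_3) : Prop := exists w, A = beta_word w.
Definition inZBu (A : 'M[K]_3) : Prop :=
  inBu A /\ forall C, inBu C -> A *m C = C *m A.

Definition beta_Delta : 'M[K]_3 :=
  beta_word [:: (true, false); (false, false); (true, false);
                (true, false); (false, false); (true, false)].

(* specialization t = -1: x has value z if x = n/d with d(-1) <> 0 and
   n(-1) = z d(-1).  (On Z[t,t^-1] this is ordinary evaluation at -1.) *)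
Definition ev_rel (x : K) (z : int) : Prop :=
  exists n d : {poly int}, d.[-1] != 0 /\ x = tofrac n / tofrac d /\ n.[-1] = z * d.[-1].
Definition ev_m1 (x : K) : int := epsilon (inhabits 0) (ev_rel x).
Definition spec_m1 (A : 'M[K]_3) : 'M[int]_3 := \matrix_(i, j) ev_m1 (A i j).

Definition rho (B : 'M[int]_3) : 'M[int]_2 :=
  \matrix_(i < 2, j < 2)
    (if (i : nat) == 0%N then
       (if (j : nat) == 0%N then 1 - B (inord 0) (inord 2) else 1 - B (inord 0) (inord 0))
     else
       (if (j : nat) == 0%N then 1 - B (inord 2) (inord 2) else 1 - B (inord 2) (inord 0))).

Definition intmxK (M : 'M[int]_2) : 'M[K]_2 := map_mx (fun z : int => z%:~R) M.

(* rho(A|_{t=-1}) as a matrix over Q(t); rhobar(A) is its class in PGL(2,Q(t)) *)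
Definition rhoK (A : 'M[K]_3) : 'M[K]_2 := intmxK (rho (spec_m1 A)).

Definition pgl_eq (P Q : 'M[K]_2) : Prop := exists c : K, c != 0 /\ P = c *: Q.

From HB Require Import structures.
From mathcomp Require Import all_boot all_order all_algebra fraction.
From mathcomp Require Import ring zify.
From Stdlib Require Import ClassicalEpsilon.
Set Implicit Arguments. Unset Strict Implicit. Unset Printing Implicit Defensive.
Import Order.TTheory GRing.Theory Num.Theory.
Local Open Scope ring_scope.

(* In any ring where s1, s2 are units satisfying the braid relation, a := s1 s2 s1 and
   b := s1 s2 satisfy a^2 = b^3 =: z with z central, and every word in the generators can be
   rewritten, by a purely combinatorial procedure, as z^k times a reduced word in a and b.
   At t = -1 the Burau matrices have row sums 1 and fix the row vector (1, -1, 1); rho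
   reads off their corners, which makes rho multiplicative on Bu, with image the subgroup of
   SL(2, Z) generated by [[1, -1], [0, 1]] and [[1, 0], [1, 1]]; Euclid's algorithm shows it is
   all of SL(2, Z).  In SL(2, Z) one has z = -1, and a nontrivial reduced word is never +-1
   because its blocks a b, a b^2 are +- positive unipotent matrices whose products grow.
   Hence rho(beta(w)) = +-1 forces the normal form of w to be z^k, i.e. beta(w) = beta(Delta)^k;
   a central element maps to the centralizer {1, -1} of the two generators.  Finally
   (1, -1, 0) is a left eigenvector of beta(Delta) with eigenvalue t^3, so beta(Delta) has
   infinite order. *)

Section Words.
Variables (R : unitRingType) (s1 s2 : R).

Definition gen_val (g : bool * bool) : R :=
  let x := if g.1 then s1 else s2 in if g.2 then x^-1 else x.
Definition word_val (w : seq (bool * bool)) : R := foldr (fun g acc => gen_val g * acc) 1 w.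

Lemma word_val_cat w1 w2 : word_val (w1 ++ w2) = word_val w1 * word_val w2.
Proof. by elim: w1 => [|g w IH] /=; rewrite ?mul1r // IH mulrA. Qed.

Lemma word_val_expr u n : exists w, word_val w = word_val u ^+ n.
Proof.
elim: n => [|n [w E]]; first by exists [::].
by exists (u ++ w); rewrite word_val_cat E exprS.
Qed.

End Words.

Section NormalForm.
Variables (R : unitRingType) (s1 s2 a b : R).
Local Notation z := (a * a).

(* The normal form (k, (o, [:: e1; ...; en], p)) stands for
   z^k b^o (a b^e1) ... (a b^en) a^p, where a boolean exponent e means b^2 if e else b,
   and o = None means no leading power of b. *)
Definition block (e : bool) := if e then b * b else b.
Definition blocks (B : seq bool) := foldr (fun e acc => a * block e * acc) 1 B.

Definition core := (option bool * seq bool * bool)%type.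
Definition core1 : core := (None, [::], false).
Definition core_val (c : core) :=
  let: (o, B, p) := c in
  (if o is Some e then block e else 1) * blocks B * (if p then a else 1).
Definition nf_val (n : int * core) := z ^ n.1 * core_val n.2.

Definition nf_mul_a (n : int * core) : int * core :=
  match n with
  | (k, (Some e, B, p)) => (k, (None, e :: B, p))
  | (k, (None, e :: B, p)) => (k + 1, (Some e, B, p))
  | (k, (None, [::], false)) => (k, (None, [::], true))
  | (k, (None, [::], true)) => (k + 1, core1)
  end.

Definition nf_mul_b (n : int * core) : int * core :=
  match n with
  | (k, (None, B, p)) => (k, (Some false, B, p))
  | (k, (Some false, B, p)) => (k, (Some true, B, p))
  | (k, (Some true, B, p)) => (k + 1, (None, B, p))
  end.

Definition nf_div_z (n : int * core) : int * core := (n.1 - 1, n.2).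

Definition nf_mul_gen (g : bool * bool) (n : int * core) : int * core :=
  nf_div_z (match g with
            | (true, false) => nf_mul_b (nf_mul_b (nf_mul_a n))
            | (true, true) => nf_mul_a (nf_mul_b n)
            | (false, false) => nf_mul_a (nf_mul_b (nf_mul_b n))
            | (false, true) => nf_mul_b (nf_mul_a n)
            end).

Definition nf_of (w : seq (bool * bool)) : int * core := foldr nf_mul_gen (0, core1) w.

Hypothesis b3 : b * b * b = z.
Hypothesis z_unit : z \is a GRing.unit.
Hypotheses (z_s1 : z * s1 = b * b * a) (z_s1V : z * s1^-1 = a * b).
Hypotheses (z_s2 : z * s2 = a * b * b) (z_s2V : z * s2^-1 = b * a).

Lemma nf_val_succ k c : nf_val (k + 1, c) = z ^ k * (z * core_val c).
Proof. by rewrite /nf_val /= exprzDr // expr1z !mulrA. Qed.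

Lemma nf_mul_aP n : a * nf_val n = nf_val (nf_mul_a n).
Proof.
have za : GRing.comm a (z ^ n.1) by apply: commrXz; rewrite /GRing.comm mulrA.
case: n za => k c /= za; rewrite {1}/nf_val mulrA za -mulrA.
case: c => [[[e|] [|e' B]] [|]] /=; rewrite ?nf_val_succ /nf_val /=.
all: by rewrite ?mul1r ?mulr1 ?mulrA.
Qed.

Lemma nf_mul_bP n : b * nf_val n = nf_val (nf_mul_b n).
Proof.
have zb : GRing.comm b (z ^ n.1) by apply: commrXz; rewrite /GRing.comm -b3 !mulrA.
case: n zb => k c /= zb; rewrite {1}/nf_val mulrA zb -mulrA.
case: c => [[[[]|] B] p]; rewrite /= ?nf_val_succ /nf_val /= ?mul1r.
  by rewrite -b3 !mulrA.
all: by rewrite !mulrA.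
Qed.

Lemma nf_div_zP n : z^-1 * nf_val n = nf_val (nf_div_z n).
Proof.
case: n => k c; have zV_comm : GRing.comm z^-1 (z ^ k).
  by apply/commrXz/commr_sym/commrV/commr_refl.
by rewrite /nf_val exprzDr // -exprz_inv expr1z mulrA zV_comm -mulrA.
Qed.

Lemma gen_val_mul g x : gen_val s1 s2 g * x = z^-1 * match g with
  | (true, false) => b * (b * (a * x))
  | (true, true) => a * (b * x)
  | (false, false) => a * (b * (b * x))
  | (false, true) => b * (a * x)
  end.
Proof.
case: g => [[] []]; rewrite /gen_val /= -[X in X * x](mulKr z_unit).
all: by rewrite ?z_s1 ?z_s1V ?z_s2 ?z_s2V !mulrA.
Qed.

Lemma word_val_nf w : word_val s1 s2 w = nf_val (nf_of w).
Proof.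
elim: w => [|g w IH] /=; first by rewrite /nf_val /= expr0z !mul1r.
rewrite gen_val_mul IH -nf_div_zP.
by case: g => [[] []]; rewrite ?(nf_mul_aP, nf_mul_bP).
Qed.

End NormalForm.

Section Braid.
Variables (R : unitRingType) (s1 s2 : R).
Hypotheses (s1_unit : s1 \is a GRing.unit) (s2_unit : s2 \is a GRing.unit).
Hypothesis braid : s1 * s2 * s1 = s2 * s1 * s2.
Local Notation a := (s1 * s2 * s1).
Local Notation b := (s1 * s2).

Lemma braid_z_unit : a * a \is a GRing.unit.
Proof. by rewrite !unitrMl. Qed.

Lemma braid_word_val_nf w : word_val s1 s2 w = nf_val a b (nf_of w).
Proof.
have b3 : b * b * b = a * a by rewrite {2}braid !mulrA.
apply: word_val_nf => //; first exact: braid_z_unit.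
- by rewrite -b3 -mulrA.
- by rewrite -mulrA mulrK.
- by rewrite !mulrA.
- by rewrite [a * a](_ : _ = b * a * s2) ?mulrK // {2}braid !mulrA.
Qed.

Lemma braid_z_comm_word k w : GRing.comm ((a * a) ^ k) (word_val s1 s2 w).
Proof.
have a_s1 : a * s1 = s2 * a by rewrite !mulrA -braid.
have a_s2 : a * s2 = s1 * a by rewrite -!mulrA [s2 * (s1 * s2)]mulrA -braid !mulrA.
have z_s1 : GRing.comm (a * a) s1 by rewrite /GRing.comm -mulrA a_s1 mulrA a_s2 -mulrA.
have z_s2 : GRing.comm (a * a) s2 by rewrite /GRing.comm -mulrA a_s2 mulrA a_s1 -mulrA.
apply/commr_sym/commrXz/commr_sym; elim: w => [|[[] []] w IH] /=; first exact: commr1.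
all: by apply: (commrM _ IH); rewrite /gen_val /=; try apply: commrV.
Qed.

Definition delta_word : seq (bool * bool) :=
  [:: (true, false); (false, false); (true, false); (true, false); (false, false); (true, false)].

Lemma word_val_delta : word_val s1 s2 delta_word = a * a.
Proof. by rewrite /= mulr1 !mulrA. Qed.

Lemma word_val_delta_inv : word_val s1 s2 [seq (g.1, true) | g <- delta_word] = (a * a)^-1.
Proof.
set W := word_val _ _ _.
have WK : W * (a * a) = 1 by rewrite /W /= mulr1 !mulrA !divrK // mulVr.
by rewrite -[W](mulrK braid_z_unit) WK mul1r.
Qed.

Lemma braid_z_pow_word k : exists w, word_val s1 s2 w = (a * a) ^ k.
Proof.
case: k => n.
  by have [w E] := word_val_expr s1 s2 delta_word n; exists w; rewrite E word_val_delta.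
have [w E] := word_val_expr s1 s2 [seq (g.1, true) | g <- delta_word] n.+1.
by exists w; rewrite E word_val_delta_inv exprVn.
Qed.

End Braid.

Section Mat2.
Variable R : nzRingType.

Definition mat2 (p q r s : R) : 'M[R]_2 :=
  \matrix_(i < 2, j < 2)
    if (i : nat) == 0%N then (if (j : nat) == 0%N then p else q)
    else (if (j : nat) == 0%N then r else s).

Lemma mat2_mul (p q r s p' q' r' s' : R) :
  mat2 p q r s * mat2 p' q' r' s' =
  mat2 (p * p' + q * r') (p * q' + q * s') (r * p' + s * r') (r * q' + s * s').
Proof.
apply/matrixP => i j; rewrite !mxE !big_ord_recr big_ord0 /= !mxE add0r.
by case: i => [[|[|//]] Hi]; case: j => [[|[|//]] Hj].
Qed.

Lemma mat2_eta (M : 'M[R]_2) :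
  M = mat2 (M ord0 ord0) (M ord0 ord_max) (M ord_max ord0) (M ord_max ord_max).
Proof.
apply/matrixP => i j; rewrite !mxE.
by case: i => [[|[|//]] Hi]; case: j => [[|[|//]] Hj]; congr (M _ _); apply: val_inj.
Qed.

Lemma mat2_inj (p q r s p' q' r' s' : R) :
  mat2 p q r s = mat2 p' q' r' s' -> [/\ p = p', q = q', r = r' & s = s'].
Proof.
move=> E; have := congr1 (fun M : 'M[R]_2 =>
  (M ord0 ord0, M ord0 ord_max, M ord_max ord0, M ord_max ord_max)) E.
by rewrite !mxE /= => -[-> -> -> ->].
Qed.

Lemma mat2_scalar (x : R) : x%:M = mat2 x 0 0 x.
Proof.
apply/matrixP => i j; rewrite !mxE.
by case: i => [[|[|//]] Hi]; case: j => [[|[|//]] Hj].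
Qed.

Lemma mat2_1 : 1 = mat2 1 0 0 1.
Proof. exact: mat2_scalar. Qed.

Lemma mat2_opp (p q r s : R) : - mat2 p q r s = mat2 (- p) (- q) (- r) (- s).
Proof.
apply/matrixP => i j; rewrite !mxE.
by case: i => [[|[|//]] Hi]; case: j => [[|[|//]] Hj].
Qed.

Lemma mat2_N1 : -1 = mat2 (-1) 0 0 (-1).
Proof. by rewrite mat2_1 mat2_opp oppr0. Qed.

Lemma mat2_upper_expr (x : R) n : mat2 1 x 0 1 ^+ n = mat2 1 (x *+ n) 0 1.
Proof.
elim: n => [|n IH]; first by rewrite expr0 mulr0n mat2_1.
by rewrite exprS IH mat2_mul !(mul1r, mulr1, mul0r, mulr0, addr0, add0r) mulrSr.
Qed.

End Mat2.

Lemma det_mat2 (R : comNzRingType) (p q r s : R) : \det (mat2 p q r s) = p * s - q * r.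
Proof.
rewrite (expand_det_row _ ord0) !big_ord_recr big_ord0 /= add0r.
by rewrite /cofactor !det_mx11 !mxE /= expr0 expr1 mul1r mulN1r mulrN.
Qed.

Lemma mat2_unit (p q r s : int) : p * s - q * r = 1 -> mat2 p q r s \is a GRing.unit.
Proof. by move=> det1; rewrite unitmxE det_mat2 det1 unitr1. Qed.

Lemma intz_mul_eq1 (p s : int) : p * s = 1 -> p = 1 \/ p = -1.
Proof.
move=> ps1; have : p \is a intUnitRing.unitz by apply: (@intUnitRing.unitzPl _ s); rewrite mulrC.
by rewrite qualifE => /orP[/eqP|/eqP]; auto.
Qed.

Lemma unit_invr_eq (R : unitRingType) (x y : R) : x \is a GRing.unit -> x * y = 1 -> x^-1 = y.
Proof. by move=> ux xy1; rewrite -[LHS]mulr1 -xy1 mulKr. Qed.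

Lemma mx_inv_of_mul1 (R : comUnitRingType) n (A B : 'M[R]_n.+1) :
  A * B = 1 -> A^-1 = B /\ invmx A = B.
Proof.
move=> AB1; have [A_unit _] := mulmx1_unit AB1.
by split; [exact: unit_invr_eq AB1 | rewrite -[LHS]mulmx1 idmxE -AB1 mulKmx].
Qed.

Lemma sign_exprz (R : unitRingType) (k : int) : (-1 : R) ^ k = 1 \/ (-1 : R) ^ k = -1.
Proof.
have sign_expr n : (-1 : R) ^+ n = 1 \/ (-1 : R) ^+ n = -1.
  by rewrite -signr_odd; case: (odd n); [right; rewrite expr1 | left; rewrite expr0].
by case: k => n; rewrite /exprz ?invr_sign; apply: sign_expr.
Qed.

Definition sl2_s1 : 'M[int]_2 := mat2 1 (-1) 0 1.
Definition sl2_s2 : 'M[int]_2 := mat2 1 0 1 1.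
Local Notation sl2_a := (sl2_s1 * sl2_s2 * sl2_s1).
Local Notation sl2_b := (sl2_s1 * sl2_s2).

Lemma sl2_s1_unit : sl2_s1 \is a GRing.unit. Proof. by apply: mat2_unit. Qed.
Lemma sl2_s2_unit : sl2_s2 \is a GRing.unit. Proof. by apply: mat2_unit. Qed.

Lemma sl2_braid : sl2_s1 * sl2_s2 * sl2_s1 = sl2_s2 * sl2_s1 * sl2_s2.
Proof. by rewrite /sl2_s1 /sl2_s2 !mat2_mul; congr mat2; ring. Qed.

Lemma sl2_aE : sl2_a = mat2 0 (-1) 1 0.
Proof. by rewrite /sl2_s1 /sl2_s2 !mat2_mul; congr mat2; ring. Qed.

Lemma sl2_bE : sl2_b = mat2 0 (-1) 1 1.
Proof. by rewrite /sl2_s1 /sl2_s2 !mat2_mul; congr mat2; ring. Qed.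

Lemma sl2_s1V : sl2_s1^-1 = mat2 1 1 0 1.
Proof. by apply: unit_invr_eq sl2_s1_unit _; rewrite mat2_mul mat2_1; congr mat2; ring. Qed.

Lemma sl2_s2V : sl2_s2^-1 = mat2 1 0 (-1) 1.
Proof. by apply: unit_invr_eq sl2_s2_unit _; rewrite mat2_mul mat2_1; congr mat2; ring. Qed.

Lemma sl2_gen_val g : gen_val sl2_s1 sl2_s2 g =
  match g with
  | (true, false) => mat2 1 (-1) 0 1
  | (true, true) => mat2 1 1 0 1
  | (false, false) => mat2 1 0 1 1
  | (false, true) => mat2 1 0 (-1) 1
  end.
Proof. by case: g => [[] []]; rewrite /gen_val /= ?sl2_s1V ?sl2_s2V. Qed.

Lemma sl2_det_word w : \det (word_val sl2_s1 sl2_s2 w) = 1.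
Proof.
elim: w => [|g w IH] /=; first by rewrite det1.
by rewrite det_mulmx IH mulr1 sl2_gen_val; case: g => [[] []]; rewrite det_mat2; ring.
Qed.

Lemma sl2_a_block e :
  sl2_a * block sl2_b e = - (if e then mat2 1 0 1 1 else mat2 1 1 0 1).
Proof. by case: e; rewrite /block sl2_aE sl2_bE !mat2_mul mat2_opp; congr mat2; ring. Qed.

Lemma sl2_blocks B : exists p q r s : int,
  (blocks sl2_a sl2_b B = mat2 p q r s \/ blocks sl2_a sl2_b B = - mat2 p q r s) /\
  [/\ 0 <= p, 0 <= q, 0 <= r & 0 <= s] /\ 1 <= p + q /\ 1 <= r + s /\
  2 + (size B)%:Z <= p + q + r + s.
Proof.
elim: B => [|e B [p [q [r [s [E [[p0 q0 r0 s0] [h1 [h2 h3]]]]]]]]] /=.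
  exists 1, 0, 0, 1; split; first by left; exact: mat2_1.
  by split; [split|]; lia.
rewrite sl2_a_block; case: e; [exists p, q, (p + r), (q + s) | exists (p + r), (q + s), r, s].
all: split; last by split; [split|]; lia.
all: by case: E => ->; [right | left]; rewrite ?mulrN mulNr ?opprK mat2_mul ?mat2_opp;
  congr mat2; ring.
Qed.

Lemma sl2_core_val_pm1 c :
  core_val sl2_a sl2_b c = 1 \/ core_val sl2_a sl2_b c = -1 -> c = core1.
Proof.
case: c => [[o B] a_last] c_pm1.
have [p [q [r [s [blocksE [[p0 q0 r0 s0] [pq [rs size_le]]]]]]]] := sl2_blocks B.
case: o a_last c_pm1 => [[]|] [] /= c_pm1; case: blocksE => blocksE; rewrite blocksE in c_pm1;
  rewrite /block ?sl2_aE ?sl2_bE ?mulr1 ?mul1r ?mulrN ?mulNr ?mat2_mul ?mat2_opp ?mat2_mul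
    ?mat2_opp ?mat2_N1 ?mat2_1 in c_pm1;
  try by case: c_pm1 => /mat2_inj[e1 e2 e3 e4]; lia.
all: case: B size_le {blocksE} => [|e B] /= size_le //.
all: by case: c_pm1 => /mat2_inj[e1 e2 e3 e4]; lia.
Qed.

Lemma sl2_word_val_nf w :
  word_val sl2_s1 sl2_s2 w = (-1) ^ (nf_of w).1 * core_val sl2_a sl2_b (nf_of w).2.
Proof.
rewrite (braid_word_val_nf sl2_s1_unit sl2_s2_unit sl2_braid) /nf_val.
by rewrite sl2_aE mat2_mul mat2_N1; congr (mat2 _ _ _ _ ^ _ * _); ring.
Qed.

Lemma sl2_word_pm1 w :
  word_val sl2_s1 sl2_s2 w = 1 \/ word_val sl2_s1 sl2_s2 w = -1 -> (nf_of w).2 = core1.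
Proof.
rewrite sl2_word_val_nf => H; apply: sl2_core_val_pm1.
case: (sign_exprz 'M[int]_2 (nf_of w).1) H => ->; rewrite ?mul1r ?mulN1r // => -[] E.
- by right; rewrite -[LHS]opprK E.
- by left; rewrite -[LHS]opprK E opprK.
Qed.

Lemma sl2_centralizer M :
  M * sl2_s1 = sl2_s1 * M -> M * sl2_s2 = sl2_s2 * M -> \det M = 1 -> M = 1 \/ M = -1.
Proof.
rewrite [M]mat2_eta det_mat2 /sl2_s1 /sl2_s2 !mat2_mul.
move: (M _ _) (M _ _) (M _ _) (M _ _) => p q r s /mat2_inj[e1 e2 e3 e4] /mat2_inj[f1 f2 f3 f4].
have [-> -> ->] : [/\ q = 0, r = 0 & s = p] by split; lia.
rewrite mulr0 subr0 mat2_N1 mat2_1 => /intz_mul_eq1[] ->; by [left | right].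
Qed.

Definition sl2_word (M : 'M[int]_2) : Prop := exists w, word_val sl2_s1 sl2_s2 w = M.

Lemma sl2_word_mul M N : sl2_word M -> sl2_word N -> sl2_word (M * N).
Proof. by move=> [w1 <-] [w2 <-]; exists (w1 ++ w2); rewrite word_val_cat. Qed.

Lemma sl2_word_upper_unipotent (k : int) : sl2_word (mat2 1 k 0 1).
Proof.
case: k => n.
  have [w E] := word_val_expr sl2_s1 sl2_s2 [:: (true, true)] n.
  by exists w; rewrite E /= mulr1 sl2_gen_val mat2_upper_expr natz.
have [w E] := word_val_expr sl2_s1 sl2_s2 [:: (true, false)] n.+1.
by exists w; rewrite E /= mulr1 sl2_gen_val mat2_upper_expr mulNrn NegzE natz.
Qed.

Lemma sl2_word_N1 : sl2_word (-1).
Proof.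
exists delta_word; rewrite (word_val_delta sl2_s1 sl2_s2) sl2_aE mat2_mul mat2_N1.
by congr mat2; ring.
Qed.

Lemma sl2_word_upper p q s : p * s = 1 -> sl2_word (mat2 p q 0 s).
Proof.
move=> ps1; have [p1|pN1] := intz_mul_eq1 ps1; move: ps1; rewrite ?p1 ?pN1.
- by rewrite mul1r => ->; apply: sl2_word_upper_unipotent.
- rewrite mulN1r => /(congr1 -%R); rewrite opprK => ->.
  have -> : mat2 (-1) q 0 (-1) = -1 * mat2 1 (- q) 0 1.
    by rewrite mat2_N1 mat2_mul; congr mat2; ring.
  exact: sl2_word_mul sl2_word_N1 (sl2_word_upper_unipotent _).
Qed.

Lemma sl2_word_S_inv : sl2_word (mat2 0 1 (-1) 0).
Proof.
exists [:: (true, true); (false, true); (true, true)].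
by rewrite /= mulr1 !sl2_gen_val !mat2_mul; congr mat2; ring.
Qed.

Lemma sl2_word_det1_bounded n p q r s :
  `|r| < n%:Z -> p * s - q * r = 1 -> sl2_word (mat2 p q r s).
Proof.
elim: n p q r s => [|n IH] p q r s r_lt det1; first by lia.
have [r0|r_neq0] := eqVneq r 0.
  by rewrite r0; apply: sl2_word_upper; rewrite -det1 r0; ring.
have p_eq := divz_eq p r.
set m := (p %/ r)%Z in p_eq; set p1 := (p %% r)%Z in p_eq.
have p1_ge0 : 0 <= p1 by apply: modz_ge0.
have p1_lt : p1 < `|r| by apply: ltz_mod.
have -> : mat2 p q r s = mat2 1 m 0 1 * (mat2 0 1 (-1) 0 * mat2 (- r) (- s) p1 (q - m * s)).
  by rewrite !mat2_mul {1}p_eq; congr mat2; ring.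
apply: sl2_word_mul; first exact: sl2_word_upper_unipotent.
apply: sl2_word_mul; first exact: sl2_word_S_inv.
by apply: IH; [lia | rewrite -det1 p_eq; ring].
Qed.

Lemma sl2_word_det1 (M : 'M[int]_2) : \det M = 1 -> sl2_word M.
Proof.
rewrite [M]mat2_eta det_mat2 => det1.
apply: (@sl2_word_det1_bounded (absz (M ord_max ord0)).+1 _ _ _ _ _ det1).
by rewrite -abszE ltz_nat.
Qed.

Section Mat3.
Variable R : nzRingType.

Definition mat3 (a b c d e f g h k : R) : 'M[R]_3 :=
  \matrix_(i < 3, j < 3)
    if (i : nat) == 0%N then (if (j : nat) == 0%N then a else if (j : nat) == 1%N then b else c)
    else if (i : nat) == 1%N then (if (j : nat) == 0%N then d else if (j : nat) == 1%N then e else f)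
    else (if (j : nat) == 0%N then g else if (j : nat) == 1%N then h else k).

Lemma mat3_mul (a b c d e f g h k a' b' c' d' e' f' g' h' k' : R) :
  mat3 a b c d e f g h k * mat3 a' b' c' d' e' f' g' h' k' =
  mat3 (a * a' + b * d' + c * g') (a * b' + b * e' + c * h') (a * c' + b * f' + c * k')
       (d * a' + e * d' + f * g') (d * b' + e * e' + f * h') (d * c' + e * f' + f * k')
       (g * a' + h * d' + k * g') (g * b' + h * e' + k * h') (g * c' + h * f' + k * k').
Proof.
apply/matrixP => i j; rewrite !mxE !big_ord_recr big_ord0 /= !mxE add0r.
by case: i => [[|[|[|//]]] Hi]; case: j => [[|[|[|//]]] Hj].
Qed.

Lemma mat3_1 : 1 = mat3 1 0 0 0 1 0 0 0 1.
Proof.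
apply/matrixP => i j; rewrite !mxE.
by case: i => [[|[|[|//]]] Hi]; case: j => [[|[|[|//]]] Hj].
Qed.

Lemma mat3_scale (c a b d e f g h k l : R) :
  c *: mat3 a b d e f g h k l =
  mat3 (c * a) (c * b) (c * d) (c * e) (c * f) (c * g) (c * h) (c * k) (c * l).
Proof.
apply/matrixP => i j; rewrite !mxE.
by case: i => [[|[|[|//]]] Hi]; case: j => [[|[|[|//]]] Hj].
Qed.

End Mat3.

Lemma mx3E (a b c d e f g h k : K) : mx3 a b c d e f g h k = mat3 a b c d e f g h k.
Proof.
apply/matrixP => i j; rewrite !mxE.
by case: i => [[|[|[|//]]] Hi]; case: j => [[|[|[|//]]] Hj].
Qed.

(* The integer matrices with row sums 1 that fix the row vector (1, -1, 1), parametrised by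
   their corners: the Burau matrices specialised at t = -1 are of this form. *)
Definition burau_m1 (x y u v : int) : 'M[int]_3 :=
  mat3 x (1 - x - y) y (x + u - 1) (3 - x - y - u - v) (y + v - 1) u (1 - u - v) v.

Lemma burau_m1_mul x y u v x' y' u' v' :
  burau_m1 x y u v * burau_m1 x' y' u' v' =
  burau_m1 (x * x' + (1 - x - y) * (x' + u' - 1) + y * u')
           (x * y' + (1 - x - y) * (y' + v' - 1) + y * v')
           (u * x' + (1 - u - v) * (x' + u' - 1) + v * u')
           (u * y' + (1 - u - v) * (y' + v' - 1) + v * v').
Proof. by rewrite /burau_m1 mat3_mul; congr mat3; ring. Qed.

Lemma burau_m1_1 : 1 = burau_m1 1 0 0 1.
Proof. by rewrite mat3_1 /burau_m1; congr mat3; ring. Qed.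

Lemma rho_burau_m1 x y u v : rho (burau_m1 x y u v) = mat2 (1 - y) (1 - x) (1 - v) (1 - u).
Proof. by apply/matrixP => i j; rewrite !mxE !inordK. Qed.

Lemma rho_burau_m1_mul x y u v x' y' u' v' :
  rho (burau_m1 x y u v * burau_m1 x' y' u' v') =
  rho (burau_m1 x y u v) * rho (burau_m1 x' y' u' v').
Proof. by rewrite burau_m1_mul !rho_burau_m1 mat2_mul; congr mat2; ring. Qed.

Definition burau_m1_s1 : 'M[int]_3 := burau_m1 2 0 0 1.
Definition burau_m1_s2 : 'M[int]_3 := burau_m1 1 0 0 0.

Lemma burau_m1_s1V : burau_m1_s1^-1 = burau_m1 0 0 0 1.
Proof.
by apply: (proj1 (mx_inv_of_mul1 _)); rewrite burau_m1_mul burau_m1_1; congr burau_m1.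
Qed.

Lemma burau_m1_s2V : burau_m1_s2^-1 = burau_m1 1 0 0 2.
Proof.
by apply: (proj1 (mx_inv_of_mul1 _)); rewrite burau_m1_mul burau_m1_1; congr burau_m1.
Qed.

Lemma burau_m1_gen_val g : exists x y u v,
  gen_val burau_m1_s1 burau_m1_s2 g = burau_m1 x y u v /\
  rho (burau_m1 x y u v) = gen_val sl2_s1 sl2_s2 g.
Proof.
rewrite sl2_gen_val; case: g => [[] []]; rewrite /gen_val /= ?burau_m1_s1V ?burau_m1_s2V.
all: by do 4 eexists; split; [reflexivity | rewrite rho_burau_m1; congr mat2].
Qed.

Lemma rho_burau_m1_word w :
  rho (word_val burau_m1_s1 burau_m1_s2 w) = word_val sl2_s1 sl2_s2 w.
Proof.
suff [x [y [u [v [-> <-]]]]] : exists x y u v,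
    word_val burau_m1_s1 burau_m1_s2 w = burau_m1 x y u v /\
    rho (burau_m1 x y u v) = word_val sl2_s1 sl2_s2 w by [].
elim: w => [|g w [x [y [u [v [E IH]]]]]] /=.
  by exists 1, 0, 0, 1; split; [exact: burau_m1_1 | rewrite rho_burau_m1 mat2_1; congr mat2].
have [x' [y' [u' [v' [Eg IHg]]]]] := burau_m1_gen_val g.
rewrite Eg E -IHg -IH -rho_burau_m1_mul burau_m1_mul.
by do 4 eexists; split; first reflexivity.
Qed.

Lemma tofrac_neq0_m1 (d : {poly int}) : d.[-1] != 0 -> tofrac d != 0 :> K.
Proof. by apply: contra; rewrite tofrac_eq0 => /eqP ->; rewrite horner0. Qed.

Lemma ev_rel_uniq x m n : ev_rel x m -> ev_rel x n -> m = n.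
Proof.
move=> [p [d [d_neq0 [-> pE]]]] [p' [d' [d'_neq0 [E p'E]]]].
move/eqP: E; rewrite eqr_div ?tofrac_neq0_m1 // -!tofracM tofrac_eq => /eqP E.
have /eqP := congr1 (fun r : {poly int} => r.[-1]) E.
rewrite !hornerM pE p'E -!mulrA [d'.[-1] * _]mulrC.
by move/eqP/(mulIf (mulf_neq0 d_neq0 d'_neq0)).
Qed.

Lemma ev_m1E x n : ev_rel x n -> ev_m1 x = n.
Proof. by move=> xn; apply: (ev_rel_uniq _ xn); apply: epsilon_spec; exists n. Qed.

Lemma ev_relD x y m n : ev_rel x m -> ev_rel y n -> ev_rel (x + y) (m + n).
Proof.
move=> [p [d [d_neq0 [-> pE]]]] [p' [d' [d'_neq0 [-> p'E]]]].
exists (p * d' + p' * d), (d * d'); split; first by rewrite hornerM mulf_neq0.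
split; last by rewrite hornerD !hornerM pE p'E; ring.
by rewrite tofracD !tofracM addf_div ?tofrac_neq0_m1.
Qed.

Lemma ev_relM x y m n : ev_rel x m -> ev_rel y n -> ev_rel (x * y) (m * n).
Proof.
move=> [p [d [d_neq0 [-> pE]]]] [p' [d' [d'_neq0 [-> p'E]]]].
exists (p * p'), (d * d'); split; first by rewrite hornerM mulf_neq0.
split; last by rewrite !hornerM pE p'E; ring.
by rewrite !tofracM mulf_div.
Qed.

Lemma ev_relN x n : ev_rel x n -> ev_rel (- x) (- n).
Proof.
move=> [p [d [d_neq0 [-> pE]]]]; exists (- p), d; split => //.
by rewrite tofracN mulNr hornerN pE mulNr.
Qed.

Lemma ev_rel0 : ev_rel 0 0.
Proof. by exists 0, 1; rewrite tofrac0 mul0r horner0 mul0r hornerC. Qed.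

Lemma ev_rel1 : ev_rel 1 1.
Proof. by exists 1, 1; rewrite tofrac1 divr1 hornerC mul1r oner_eq0. Qed.

Lemma ev_rel_t : ev_rel tK (-1).
Proof. by exists 'X, 1; rewrite tofrac1 divr1 hornerX hornerC mulr1 oner_eq0. Qed.

Lemma ev_rel_tV : ev_rel tK^-1 (-1).
Proof. by exists 1, 'X; rewrite tofrac1 div1r hornerX hornerC mulrNN mulr1 oppr_eq0 oner_eq0. Qed.

Lemma tK_neq0 : tK != 0.
Proof. by rewrite /tK tofrac_eq0 polyX_eq0. Qed.

Definition beta_s1_inv : 'M[K]_3 := mat3 0 1 0 tK^-1 (1 - tK^-1) 0 0 0 1.
Definition beta_s2_inv : 'M[K]_3 := mat3 1 0 0 0 0 1 0 tK^-1 (1 - tK^-1).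

Lemma beta_s1_inv_mul : beta_s1 * beta_s1_inv = 1.
Proof.
rewrite /beta_s1 mx3E mat3_mul mat3_1; congr mat3.
all: by rewrite ?mulrBr ?(mulfV tK_neq0) ?mul0r; ring.
Qed.

Lemma beta_s1_unit : beta_s1 \is a GRing.unit.
Proof. by have [unit_s _] := mulmx1_unit beta_s1_inv_mul. Qed.

Lemma beta_s1V : beta_s1^-1 = beta_s1_inv /\ invmx beta_s1 = beta_s1_inv.
Proof. exact: mx_inv_of_mul1 beta_s1_inv_mul. Qed.

Lemma beta_s2_inv_mul : beta_s2 * beta_s2_inv = 1.
Proof.
rewrite /beta_s2 mx3E mat3_mul mat3_1; congr mat3.
all: by rewrite ?mulrBr ?(mulfV tK_neq0) ?mul0r; ring.
Qed.

Lemma beta_s2_unit : beta_s2 \is a GRing.unit.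
Proof. by have [unit_s _] := mulmx1_unit beta_s2_inv_mul. Qed.

Lemma beta_s2V : beta_s2^-1 = beta_s2_inv /\ invmx beta_s2 = beta_s2_inv.
Proof. exact: mx_inv_of_mul1 beta_s2_inv_mul. Qed.

Lemma beta_braid : beta_s1 * beta_s2 * beta_s1 = beta_s2 * beta_s1 * beta_s2.
Proof. by rewrite /beta_s1 /beta_s2 !mx3E !mat3_mul; congr mat3; ring. Qed.

Lemma beta_genE g : beta_gen g = gen_val beta_s1 beta_s2 g.
Proof.
by case: g => [[] []]; rewrite /beta_gen /gen_val ?beta_s1V.2 ?beta_s2V.2 ?beta_s1V.1 ?beta_s2V.1.
Qed.

Lemma beta_wordE w : beta_word w = word_val beta_s1 beta_s2 w.
Proof.
elim: w => [|g w IH]; first exact: idmxE.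
by rewrite [LHS]/(beta_gen g * beta_word w) IH beta_genE.
Qed.

Lemma beta_DeltaE : beta_Delta = beta_s1 * beta_s2 * beta_s1 * (beta_s1 * beta_s2 * beta_s1).
Proof. by rewrite /beta_Delta beta_wordE word_val_delta. Qed.

Definition ev_mx_rel (A : 'M[K]_3) (B : 'M[int]_3) := forall i j, ev_rel (A i j) (B i j).

Lemma ev_mx_rel_mul A B C D : ev_mx_rel A B -> ev_mx_rel C D -> ev_mx_rel (A * C) (B * D).
Proof.
move=> AB CD i j; rewrite -!mulmxE !mxE.
apply: (big_ind2 ev_rel); first exact: ev_rel0.
  by move=> *; exact: ev_relD.
by move=> k _; exact: ev_relM.
Qed.

Lemma ev_mx_rel_mat3 (a b c d e f g h k : K) (a' b' c' d' e' f' g' h' k' : int) :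
  ev_rel a a' -> ev_rel b b' -> ev_rel c c' -> ev_rel d d' -> ev_rel e e' ->
  ev_rel f f' -> ev_rel g g' -> ev_rel h h' -> ev_rel k k' ->
  ev_mx_rel (mat3 a b c d e f g h k) (mat3 a' b' c' d' e' f' g' h' k').
Proof.
move=> *; move=> i j; rewrite !mxE.
by case: i => [[|[|[|//]]] Hi]; case: j => [[|[|[|//]]] Hj].
Qed.

Lemma ev_mx_rel_gen g :
  ev_mx_rel (gen_val beta_s1 beta_s2 g) (gen_val burau_m1_s1 burau_m1_s2 g).
Proof.
have ev_rel_1B x : ev_rel x (-1) -> ev_rel (1 - x) 2 by move/ev_relN/(ev_relD ev_rel1).
case: g => [[] []]; rewrite /gen_val /= ?beta_s1V.1 ?beta_s2V.1 ?burau_m1_s1V ?burau_m1_s2V.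
all: rewrite /beta_s1 /beta_s2 ?mx3E; apply: ev_mx_rel_mat3.
all: by [exact: ev_rel0 | exact: ev_rel1 | exact: ev_rel_t | exact: ev_rel_tV
        | exact: ev_rel_1B ev_rel_t | exact: ev_rel_1B ev_rel_tV].
Qed.

Lemma spec_m1_beta_word w : spec_m1 (beta_word w) = word_val burau_m1_s1 burau_m1_s2 w.
Proof.
have ev_word : ev_mx_rel (word_val beta_s1 beta_s2 w) (word_val burau_m1_s1 burau_m1_s2 w).
  elim: w => [|g w IH]; last exact: ev_mx_rel_mul (ev_mx_rel_gen g) IH.
  by rewrite /= !mat3_1; apply: ev_mx_rel_mat3; (exact: ev_rel0 || exact: ev_rel1).
by apply/matrixP => i j; rewrite mxE beta_wordE; apply: ev_m1E.
Qed.

Lemma rhoK_beta_word w : rhoK (beta_word w) = intmxK (word_val sl2_s1 sl2_s2 w).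
Proof. by rewrite /rhoK spec_m1_beta_word rho_burau_m1_word. Qed.

Lemma intmxK_mul (X Y : 'M[int]_2) : intmxK (X * Y) = intmxK X *m intmxK Y.
Proof. exact: map_mxM. Qed.

Lemma intmxK1 : intmxK 1 = 1%:M.
Proof. exact: map_mx1. Qed.

Lemma intK_inj : injective (fun z : int => z%:~R : K).
Proof.
move=> m n /= mn; have : tofrac (m%:~R : {poly int}) = tofrac (n%:~R : {poly int}).
  by rewrite !rmorph_int.
move/eqP; rewrite tofrac_eq => /eqP /(congr1 (fun p : {poly int} => p`_0)).
by rewrite !coefMrz coef1 !intz.
Qed.

Lemma intmxK_inj : injective intmxK.
Proof.
move=> X Y /matrixP XY; apply/matrixP => i j; apply: intK_inj.
by have := XY i j; rewrite !mxE.
Qed.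

Lemma intmxKN1 : intmxK (-1) = (-1 : K) *: 1%:M.
Proof.
apply/matrixP => i j; rewrite !mxE.
by case: (i == j); rewrite /= ?mulr1 ?mulr0 intrN ?mulr1z ?mulr0z ?oppr0.
Qed.

Lemma pgl_eq1_sl2 (M : 'M[int]_2) : \det M = 1 -> pgl_eq (intmxK M) 1%:M -> M = 1 \/ M = -1.
Proof.
move=> det1 [c [c_neq0 E]].
have entry i j : (M i j)%:~R = c * (i == j)%:R :> K.
  by have := congr1 (fun A : 'M[K]_2 => A i j) E; rewrite !mxE.
have offdiag i j : i != j -> M i j = 0.
  by move=> /negbTE ij; apply: intK_inj; rewrite /= entry ij mulr0.
have diag : M ord0 ord0 = M ord_max ord_max by apply: intK_inj; rewrite /= !entry !eqxx.
move: det1; rewrite [M]mat2_eta det_mat2 (offdiag ord0 ord_max) ?(offdiag ord_max ord0) //.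
rewrite diag mulr0 subr0 mat2_N1 mat2_1.
by case/intz_mul_eq1 => ->; [left | right].
Qed.

Definition delta_eigenrow : 'M[K]_3 := mat3 1 (-1) 0 0 0 0 0 0 0.

Lemma delta_eigenrowE : delta_eigenrow * beta_Delta = tK ^+ 3 *: delta_eigenrow.
Proof.
rewrite beta_DeltaE /delta_eigenrow /beta_s1 /beta_s2 !mx3E !mat3_mul mat3_scale.
by congr mat3; ring.
Qed.

Lemma beta_Delta_expr_eq1 n : beta_Delta ^+ n = 1 -> n = 0%N.
Proof.
have eigen_expr : delta_eigenrow * beta_Delta ^+ n = tK ^+ (3 * n) *: delta_eigenrow.
  elim: n => [|n IH]; first by rewrite expr0 mulr1 muln0 expr0 scale1r.
  by rewrite exprS mulrA delta_eigenrowE -scalerAl IH scalerA -exprD mulnS addnC.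
move=> Delta_n1; move: eigen_expr; rewrite Delta_n1 mulr1.
move/(congr1 (fun A : 'M[K]_3 => A ord0 ord0)); rewrite !mxE /= mulr1 => /esym.
rewrite /tK -tofracXn -tofrac1 => /eqP; rewrite tofrac_eq => /eqP.
move/(congr1 (fun p : {poly int} => size p)).
by rewrite size_polyXn size_poly1; case: n {Delta_n1}.
Qed.

Lemma beta_Delta_unit : beta_Delta \is a GRing.unit.
Proof. by rewrite beta_DeltaE !unitrMl // ?beta_s1_unit ?beta_s2_unit. Qed.

Lemma beta_Delta_exprz_inj : injective (fun k : int => beta_Delta ^ k).
Proof.
move=> k m /= Dkm; apply/eqP; rewrite -subr_eq0; apply/eqP.
have : beta_Delta ^ (k - m) = 1.
  by rewrite exprzDr ?beta_Delta_unit // Dkm -exprzDr ?beta_Delta_unit // subrr.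
case: (k - m) => n; first by move/beta_Delta_expr_eq1 => ->.
by move/(congr1 GRing.inv); rewrite invrK invr1 => /beta_Delta_expr_eq1.
Qed.

Lemma beta_word_cat w1 w2 : beta_word (w1 ++ w2) = beta_word w1 *m beta_word w2.
Proof. by rewrite !beta_wordE word_val_cat. Qed.

Lemma pgl_eq_refl P : pgl_eq P P.
Proof. by exists 1; rewrite oner_neq0 scale1r. Qed.

Lemma beta_word_sl2_pm1 w :
  word_val sl2_s1 sl2_s2 w = 1 \/ word_val sl2_s1 sl2_s2 w = -1 ->
  exists k, beta_word w = beta_Delta ^ k.
Proof.
move/sl2_word_pm1 => core_trivial; exists (nf_of w).1.
rewrite beta_wordE (braid_word_val_nf beta_s1_unit beta_s2_unit beta_braid) /nf_val core_trivial.
by rewrite beta_DeltaE /= !mulr1.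
Qed.

Lemma inZBu_Delta_exprz k : inZBu (beta_Delta ^ k).
Proof.
split=> [|C [w ->]]; rewrite beta_DeltaE.
  have [w E] := braid_z_pow_word beta_s1_unit beta_s2_unit k.
  by exists w; rewrite beta_wordE E.
by rewrite beta_wordE; exact: (braid_z_comm_word beta_braid).
Qed.

Lemma inZBu_beta_word w : inZBu (beta_word w) ->
  word_val sl2_s1 sl2_s2 w = 1 \/ word_val sl2_s1 sl2_s2 w = -1.
Proof.
move=> [_ central]; have comm_gen g :
    word_val sl2_s1 sl2_s2 w * gen_val sl2_s1 sl2_s2 g =
    gen_val sl2_s1 sl2_s2 g * word_val sl2_s1 sl2_s2 w.
  have := central (beta_word [:: g]) (ex_intro _ _ erefl).
  rewrite -!beta_word_cat => /(congr1 rhoK); rewrite !rhoK_beta_word => /intmxK_inj.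
  by rewrite !word_val_cat /= !mulr1.
exact: sl2_centralizer (comm_gen (true, false)) (comm_gen (false, false)) (sl2_det_word w).
Qed.

Lemma inZBuP A : inZBu A <-> exists k : int, A = beta_Delta ^ k.
Proof.
split=> [ZA|[k ->]]; last exact: inZBu_Delta_exprz.
by case: (ZA) => -[w Aw] _; rewrite Aw in ZA *; apply/beta_word_sl2_pm1/inZBu_beta_word.
Qed.

Theorem lemma3p9 :
  (* rhobar restricted to Bu is a homomorphism *)
  (forall A C, inBu A -> inBu C -> pgl_eq (rhoK (A *m C)) (rhoK A *m rhoK C)) /\
  (* with values in PSL(2,Z) *)
  (forall A, inBu A -> exists M : 'M[int]_2, \det M = 1 /\ pgl_eq (rhoK A) (intmxK M)) /\
  (* surjective onto PSL(2,Z) *)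
  (forall M : 'M[int]_2, \det M = 1 -> exists A, inBu A /\ pgl_eq (rhoK A) (intmxK M)) /\
  (* kernel = center of Bu *)
  (forall A, inBu A -> (pgl_eq (rhoK A) 1%:M <-> inZBu A)) /\
  (* center is generated by beta(Delta) *)
  (forall A, inZBu A <-> exists k : int, A = beta_Delta ^ k) /\
  (* and is infinite cyclic *)
  injective (fun k : int => beta_Delta ^ k).
Proof.
split=> [A C [w1 ->] [w2 ->]|].
  by rewrite -beta_word_cat !rhoK_beta_word word_val_cat intmxK_mul; apply: pgl_eq_refl.
split=> [A [w ->]|].
  exists (word_val sl2_s1 sl2_s2 w).
  by rewrite sl2_det_word rhoK_beta_word; split; last exact: pgl_eq_refl.
split=> [M /sl2_word_det1 [w <-]|].
  by exists (beta_word w); split; [exists w | rewrite rhoK_beta_word; apply: pgl_eq_refl].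
split=> [A [w ->]|]; last by split; [exact: inZBuP | exact: beta_Delta_exprz_inj].
rewrite inZBuP rhoK_beta_word; split=> [/(pgl_eq1_sl2 (sl2_det_word w))|].
  exact: beta_word_sl2_pm1.
move=> /inZBuP/inZBu_beta_word[]->; first by rewrite intmxK1; apply: pgl_eq_refl.
by rewrite intmxKN1; exists (-1); rewrite oppr_eq0 oner_neq0.
Qed.
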